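(* Let $K$ be a field. For $n\ge 1$ let $A_n \subset K[a_g^{(i)} : g \in \mathbb{Z}_2, i = 1,\dots,n+1]$ be the $K$-subalgebra $$A_n := K\big[a_{g_1}^{(1)}a_{g_2}^{(2)}\cdots a_{g_n}^{(n)}a_{g_1+g_2+\cdots+g_n}^{(n+1)} : g_1,\dots,g_n \in \mathbb{Z}_2\big],$$ graded by giving each variable $a_g^{(i)}$ degree one (so $A_n$ is generated by $2^n$ monomials of degree $n+1$). Then for every $n \geq 2$, $$\dim_K [A_n]_{2(n+1)} = \dim_K [A_{n-1}]_{2n} + 3^n - 2^{n-1}.$$
   Context: $\mathbb{Z}_2=\{0,1\}$ is the group of integers modulo $2$; the sums $g_1+\cdots+g_n$ are taken in $\mathbb{Z}_2$. $[A]_d$ denotes the homogeneous component of degree $d$. *)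

From HB Require Import structures.
From mathcomp Require Import all_boot all_order all_algebra.
From mathcomp Require Import mpoly.
Set Implicit Arguments. Unset Strict Implicit. Unset Printing Implicit Defensive.
Import Order.TTheory GRing.Theory Num.Theory.
Local Open Scope ring_scope.

(* The polynomial ring K[a_g^(i) : g in Z_2, i = 1..n+1] is {mpoly K[n.*2.+2]};
   the variable a_g^(i+1) (0 <= i <= n, g : bool = Z_2) is 'X_(2i+g). *)
Definition avar (n : nat) (i : nat) (g : bool) : 'I_(n.*2.+2) :=
  inord (i.*2 + g)%N.

Definition zsum (n : nat) (g : {ffun 'I_n -> bool}) : bool :=
  \big[addb/false]_(i < n) g i.

Definition gen (K : fieldType) (n : nat) (g : {ffun 'I_n -> bool})
  : {mpoly K[n.*2.+2]} :=
  (\prod_(i < n) 'X_(avar n i (g i))) * 'X_(avar n n (zsum g)).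

Definition gens (K : fieldType) (n : nat)
  : #|{ffun 'I_n -> bool}|.-tuple {mpoly K[n.*2.+2]} :=
  [tuple gen K (enum_val j) | j < #|{ffun 'I_n -> bool}|].

Definition Aalg (K : fieldType) (n : nat) : {mpoly K[n.*2.+2]} -> Prop :=
  fun q => exists P : {mpoly K[#|{ffun 'I_n -> bool}|]}, q = P \mPo gens K n.

Definition homcomp (m : nat) (K : fieldType) (S : {mpoly K[m]} -> Prop) (d : nat)
  : {mpoly K[m]} -> Prop :=
  fun q => S q /\ q \is @ishomog1 m K d mdeg.

Definition has_dim (m : nat) (K : fieldType) (S : {mpoly K[m]} -> Prop) (d : nat)
  : Prop :=
  exists b : 'I_d -> {mpoly K[m]},
    [/\ forall i, S (b i),
        (forall c : 'I_d -> K, \sum_(i < d) c i *: b i = 0 -> forall i, c i = 0)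
      & forall q, S q -> exists c : 'I_d -> K, q = \sum_(i < d) c i *: b i].

Arguments Aalg : clear implicits.

From HB Require Import structures.
From mathcomp Require Import all_boot all_order all_algebra.
From mathcomp Require Import mpoly.
From mathcomp Require Import zify.
Set Implicit Arguments. Unset Strict Implicit. Unset Printing Implicit Defensive.
Import Order.TTheory GRing.Theory Num.Theory.

(* The component of degree 2(n+1) of A_n is spanned by the products of two
   generators, which are monomials, so its dimension is the number of distinct
   exponent vectors e_g + e_h.  Such a vector is determined by the code (t, l)
   with t_i = g_i + h_i and l = sum g + sum h (all in {0,1,2}), and the codes
   that occur are characterised by the parity of the number of 1s in t.
   Counting them gives 3^n + E_n - 2^n, where E_n = (3^n + 1)/2 is the number
   of t with an even number of 1s (the signed count is 1).  The formula then
   follows from E_n - E_(n-1) = 3^(n-1). *)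

Section PairCodes.
Variable m : nat.
Local Notation G := {ffun 'I_m -> bool}.
Local Notation T := {ffun 'I_m -> 'I_3}.

Lemma zsum_xor (g d : G) : zsum [ffun i => g i (+) d i] = zsum g (+) zsum d.
Proof. by rewrite /zsum -big_split; apply: eq_bigr => i _; rewrite ffunE. Qed.

Lemma zsum_delta (i0 : 'I_m) : zsum [ffun i => i == i0] = true.
Proof.
rewrite /zsum (bigD1 i0) //= ffunE eqxx big1 // => i /negbTE.
by rewrite ffunE.
Qed.

(* t i and l are the exponents of a_1^(i+1) and of a_1^(m+1) in the product of
   the generators indexed by g and h; those of the a_0 are their complements
   to 2.  The sum l is taken in nat, not in Z_2. *)
Definition pair_code (gh : G * G) : T * 'I_3 :=
  ([ffun i => inord (gh.1 i + gh.2 i)], inord (zsum gh.1 + zsum gh.2)).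

Definition pair_codes : {set T * 'I_3} := pair_code @: setT.

Lemma pair_codeP (g h : G) (t : T) (l : 'I_3) :
  reflect ((forall i, val (t i) = g i + h i) /\ val l = zsum g + zsum h)%N
          (pair_code (g, h) == (t, l)).
Proof.
have bit2 (a b : bool) : (a + b < 3)%N by case: a; case: b.
apply: (iffP eqP) => [[<- <-]|[ht hl]].
  by split => [i|]; rewrite /= ?ffunE inordK.
congr pair; last by apply: val_inj; rewrite /= hl inordK.
by apply/ffunP => i; apply: val_inj; rewrite ffunE /= ht inordK.
Qed.

Definition count1 (t : T) : nat := \sum_(i < m) (val (t i) == 1%N).
Definition count2 (t : T) : nat := \sum_(i < m) (val (t i) == 2%N).

(* l has the parity of count1 t; a t without 1s forces g = h, hence l is twice
   the parity of count2 t. *)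
Definition admissible (t : T) (l : 'I_3) : bool :=
  if odd (count1 t) then val l == 1%N
  else if count1 t == 0%N then val l == (odd (count2 t)).*2
  else val l != 1%N.

Section Splitting.
Variables (t : T) (g h : G).
Hypothesis tE : forall i, val (t i) = (g i + h i)%N.

Lemma odd_count1 : zsum g (+) zsum h = odd (count1 t).
Proof.
rewrite /zsum /count1; elim/big_rec3: _ => // i n b b' _ IH.
by rewrite oddD -IH tE addbACA; case: (g i); case: (h i).
Qed.

Lemma count1_eq0 : count1 t = 0%N -> zsum g = odd (count2 t) /\ zsum h = odd (count2 t).
Proof.
move=> /eqP; rewrite /count1 sum_nat_eq0 => /forallP no1.
have gh i : g i = h i by move: (no1 i); rewrite tE; case: (g i); case: (h i).
have zsum_count2 (f : G) : (forall i, f i = h i) -> zsum f = odd (count2 t).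
  move=> fh; rewrite /zsum /count2; elim/big_rec2: _ => // i a n _ ->.
  by rewrite fh tE gh oddD; case: (h i).
by split; apply: zsum_count2.
Qed.

End Splitting.

Lemma admissible_pair_code (gh : G * G) : admissible (pair_code gh).1 (pair_code gh).2.
Proof.
case: gh => g h; have /pair_codeP [tE lE] := eqxx (pair_code (g, h)).
rewrite /admissible lE -(odd_count1 tE).
case: ifP => [|odd1]; first by case: (zsum g); case: (zsum h).
case: ifP => [/eqP /(count1_eq0 tE) [-> ->]|_]; first by case: (odd _).
by move: odd1; case: (zsum g); case: (zsum h).
Qed.

Lemma pair_code_admissible (t : T) (l : 'I_3) :
  admissible t l -> exists gh, pair_code gh = (t, l).
Proof.
pose g : G := [ffun i => (0 < val (t i))%N].
pose h : G := [ffun i => val (t i) == 2%N].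
have tE i : val (t i) = (g i + h i)%N.
  by rewrite !ffunE; case: (t i) => [[|[|[|]]] ?].
clearbody g h.
have [lE|l_ne] := eqVneq (val l) (zsum g + zsum h)%N.
  by exists (g, h); apply/eqP/pair_codeP.
move: l_ne; rewrite /admissible -(odd_count1 tE).
case: ifP => [odd_gh|even_gh].
  by move: odd_gh; case: (zsum g); case: (zsum h) => //= _ /negbTE ->.
case: ifP => [/eqP /(count1_eq0 tE) [-> ->]|]; first by rewrite addnn => /negbTE ->.
move=> /negbT; rewrite /count1 sum_nat_eq0 negb_forall => /existsP [i0].
rewrite eqb0 negbK => /eqP t_i0 l_ne l_ne1.
(* Moving the unit at a coordinate where t is 1 from g to h flips both parities. *)
pose d : G := [ffun i => i == i0].
exists ([ffun i => g i (+) d i], [ffun i => h i (+) d i]); apply/eqP/pair_codeP; split.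
  move=> i; rewrite !ffunE tE; have [->|] := eqVneq i i0; last by rewrite !addbF.
  by move: t_i0; rewrite tE; case: (g i0); case: (h i0).
rewrite !zsum_xor !zsum_delta; move: l_ne l_ne1 even_gh.
by case: l => [[|[|[|]]] ?] //=; case: (zsum g); case: (zsum h).
Qed.

Lemma mem_pair_codes (t : T) (l : 'I_3) : ((t, l) \in pair_codes) = admissible t l.
Proof.
apply/imsetP/idP => [[gh _ tl_gh]|/pair_code_admissible [gh <-]].
  by have := admissible_pair_code gh; rewrite -tl_gh.
by exists gh.
Qed.

Lemma card_ternary : #|{: T}| = (3 ^ m)%N.
Proof. by rewrite card_ffun !card_ord. Qed.

Lemma card_pair_codes :
  (#|pair_codes| + \sum_(t : T) (count1 t == 0%N) = 3 ^ m + \sum_(t : T) ~~ odd (count1 t))%N.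
Proof.
have -> : #|pair_codes| = (\sum_(t : T) \sum_(l < 3) admissible t l)%N.
  rewrite pair_bigA -sum1_card big_mkcond /=.
  by apply: eq_bigr => -[t l] _; rewrite mem_pair_codes; case: admissible.
rewrite -card_ternary -sum1_card -!big_split /=.
apply: eq_bigr => t _; rewrite /admissible !big_ord_recr big_ord0 /=.
have [->|_] := eqVneq (count1 t) 0%N; first by case: (odd (count2 t)).
by case: (odd (count1 t)).
Qed.

Lemma sum_count1_eq0 : (\sum_(t : T) (count1 t == 0%N) = 2 ^ m)%N.
Proof.
have prod_bool (b : 'I_m -> bool) : (\prod_(i < m) (b i : nat) = [forall i, b i])%N.
  have [/forallP all_b | /forallPn [i /negbTE not_bi]] := boolP [forall i, b i].
    by rewrite big1 // => i _; rewrite all_b.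
  by rewrite (bigD1 i) //= not_bi.
transitivity (\sum_(t : T) \prod_(i < m) (val (t i) != 1%N))%N.
  apply: eq_bigr => t _; rewrite prod_bool /count1 sum_nat_eq0.
  by congr (nat_of_bool _); apply: eq_forallb => i; rewrite eqb0.
transitivity (\prod_(i < m) \sum_(x : 'I_3) (val x != 1%N) : nat)%N.
  by rewrite bigA_distr_bigA.
rewrite (eq_bigr (fun _ => 2%N)) ?prod_nat_const ?card_ord //.
by move=> i _; rewrite !big_ord_recr big_ord0.
Qed.

Lemma sum_sign_count1 : (\sum_(t : T) (-1) ^+ count1 t = 1 :> int)%R.
Proof.
under eq_bigr do rewrite /count1 -prodrXr.
transitivity (\prod_(i < m) \sum_(x : 'I_3) (-1) ^+ (val x == 1%N) : int)%R.
  by rewrite bigA_distr_bigA.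
rewrite big1 // => i _.
by rewrite !big_ord_recr big_ord0 /= expr0 expr1 addrK add0r.
Qed.

Lemma sum_even_count1 : ((\sum_(t : T) ~~ odd (count1 t)).*2 = 3 ^ m + 1)%N.
Proof.
set E := (\sum_(t : T) _)%N; set O := (\sum_(t : T) odd (count1 t))%N.
have EO : (E + O = 3 ^ m)%N.
  rewrite -big_split /= -card_ternary -sum1_card.
  by apply: eq_bigr => t _; case: odd.
have : (E%:R - O%:R = 1 :> int)%R.
  rewrite -sum_sign_count1 /E /O !natr_sum -sumrB; apply: eq_bigr => t _.
  by rewrite -signr_odd; case: odd; rewrite ?subr0 ?sub0r.
lia.
Qed.

End PairCodes.

Local Open Scope ring_scope.

Lemma has_dim_monomials (k d : nat) (K : fieldType) (S : {mpoly K[k]} -> Prop)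
    (e : 'I_d -> 'X_{1..k}) :
  injective e -> (forall i, S 'X_[e i]) ->
  (forall q u, S q -> q@_u != 0 -> exists i, u = e i) -> has_dim S d.
Proof.
move=> e_inj S_e S_supp; exists (fun i => 'X_[e i]); split => //.
  move=> c c0 i; have := congr1 (mcoeff (e i)) c0.
  rewrite raddf_sum mcoeff0 (bigD1 i) //= mcoeffZ mcoeffX eqxx mulr1.
  rewrite big1 ?addr0 // => j /negbTE ji.
  by rewrite mcoeffZ mcoeffX (inj_eq e_inj) ji mulr0.
move=> q Sq; exists (fun i => q@_(e i)); apply/mpolyP => u.
rewrite raddf_sum /=; under eq_bigr do rewrite mcoeffZ mcoeffX.
have [qu0|/(S_supp q u Sq) [i ->]] := eqVneq q@_u 0.
  by rewrite qu0 big1 // => i _; case: eqP => [->|_]; rewrite ?qu0 ?mul0r ?mulr0.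
rewrite (bigD1 i) //= eqxx mulr1 big1 ?addr0 // => j /negbTE ji.
by rewrite (inj_eq e_inj) ji mulr0.
Qed.

Lemma mdeg_eq2 (n : nat) (u : 'X_{1..n}) :
  mdeg u = 2%N -> exists a b, u = (U_(a) + U_(b))%MM.
Proof.
move=> deg_u; have [a ua] : exists a, u a != 0%N.
  apply/existsP; apply: contraT; rewrite negb_exists => /forallP u0.
  suff u_eq0 : u = 0%MM by move: deg_u; rewrite u_eq0 mdeg0.
  by apply/mnmP => i; rewrite mnm0E; apply/eqP; rewrite -[_ == _]negbK u0.
have le_a : (U_(a) <= u)%MM.
  by apply/mnm_lepP => i; rewrite mnm1E; case: eqP => [<-|]; rewrite ?lt0n.
have /mdeg1P [b /eqP ub] : mdeg (u - U_(a))%MM == 1%N.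
  by have := mdegD (u - U_(a))%MM U_(a); rewrite submK // deg_u mdeg1 => /eqP; lia.
by exists b, a; rewrite -ub submK.
Qed.

Section PairMonomials.
Variable m : nat.
Local Notation G := {ffun 'I_m -> bool}.
Local Notation k := m.*2.+2.

Lemma avarE (i : nat) (b : bool) : (i <= m)%N -> val (avar m i b) = (i.*2 + b)%N.
Proof. by move=> le_im; apply: inordK; case: b => /=; lia. Qed.

Lemma avar_eq (i i' : nat) (b b' : bool) : (i <= m)%N -> (i' <= m)%N ->
  (avar m i b == avar m i' b') = (i == i') && (b == b').
Proof.
move=> le_im le_i'm; rewrite -val_eqE /= !avarE //.
apply/eqP/andP => [e|[/eqP -> /eqP -> //]].
have bb' : b = b' by move: (congr1 odd e); rewrite !oddD !odd_double /= !oddb.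
by rewrite -bb' in e *; split => //; lia.
Qed.

Lemma avar_half_odd (j : 'I_k) : j = avar m j./2 (odd j) /\ (j./2 <= m)%N.
Proof.
have le_jm : (j./2 <= m)%N.
  by have := ltn_ord j; rewrite -{1}(odd_double_half j); case: (odd j) => /=; lia.
by split => //; apply: val_inj; rewrite avarE // addnC odd_double_half.
Qed.

Lemma eq_mnm_avar (u v : 'X_{1..k}) :
  (forall i b, (i <= m)%N -> u (avar m i b) = v (avar m i b)) -> u = v.
Proof.
move=> uv; apply/mnmP => j; have [j_avar le_jm] := avar_half_odd j.
by rewrite j_avar; apply: uv.
Qed.

Definition gen_mnm (g : G) : 'X_{1..k} :=
  (\sum_(i < m) U_(avar m i (g i)) + U_(avar m m (zsum g)))%MM.

Lemma gen_mnm_avar (g : G) (i : 'I_m) b : gen_mnm g (avar m i b) = (g i == b) :> nat.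
Proof.
have le_im := ltnW (ltn_ord i).
rewrite mnmDE mnm_sumE mnm1E avar_eq ?leqnn // eq_sym (ltn_eqF (ltn_ord i)) addn0.
rewrite (bigD1 i) //= mnm1E avar_eq // eqxx /= big1 ?addn0 // => j /negbTE ji.
by rewrite mnm1E avar_eq ?(ltnW (ltn_ord j)) // val_eqE ji.
Qed.

Lemma gen_mnm_avar_last (g : G) b : gen_mnm g (avar m m b) = (zsum g == b) :> nat.
Proof.
rewrite mnmDE mnm_sumE mnm1E avar_eq ?leqnn // eqxx /= big1 // => j _.
by rewrite mnm1E avar_eq ?leqnn ?(ltnW (ltn_ord j)) // (ltn_eqF (ltn_ord j)).
Qed.

Lemma mdeg_gen_mnm (g : G) : mdeg (gen_mnm g) = m.+1.
Proof.
rewrite mdegD mdeg_sum mdeg1 (eq_bigr (fun _ => 1%N)) => [|i _]; last exact: mdeg1.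
by rewrite sum_nat_const card_ord muln1 addn1.
Qed.

(* The exponent of a_1^(i+1) recorded in c; the last variable for i = m. *)
Definition code_at (c : {ffun 'I_m -> 'I_3} * 'I_3) (i : nat) : nat :=
  oapp (fun i : 'I_m => val (c.1 i)) (val c.2) (insub i).

Definition code_mnm (c : {ffun 'I_m -> 'I_3} * 'I_3) : 'X_{1..k} :=
  [multinom (if odd j then code_at c j./2 else 2 - code_at c j./2)%N | j < k].

Lemma code_mnm_avar c (i : nat) b : (i <= m)%N ->
  code_mnm c (avar m i b) = if b then code_at c i else (2 - code_at c i)%N.
Proof.
by move=> le_im; rewrite mnmE avarE // oddD odd_double addnC half_bit_double /= oddb.
Qed.

Lemma code_at_ord c (i : 'I_m) : code_at c i = val (c.1 i).
Proof. by rewrite /code_at valK. Qed.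

Lemma code_at_last c : code_at c m = val c.2.
Proof. by rewrite /code_at insubF ?ltnn. Qed.

Lemma code_mnm_inj : injective code_mnm.
Proof.
move=> [t l] [t' l'] e.
have at_eq i : (i <= m)%N -> code_at (t, l) i = code_at (t', l') i.
  by move=> le_im; have := congr1 (fun u : 'X_{1..k} => u (avar m i true)) e; rewrite /= !code_mnm_avar.
congr pair; last by apply: val_inj; have := at_eq m (leqnn m); rewrite !code_at_last.
apply/ffunP => i; apply: val_inj.
by have := at_eq i (ltnW (ltn_ord i)); rewrite !code_at_ord.
Qed.

Lemma gen_mnmD (g h : G) : (gen_mnm g + gen_mnm h)%MM = code_mnm (pair_code (g, h)).
Proof.
have /pair_codeP [tE lE] := eqxx (pair_code (g, h)).
apply: eq_mnm_avar => i b le_im; rewrite mnmDE code_mnm_avar //.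
move: le_im; rewrite leq_eqVlt => /predU1P [->|lt_im].
  by rewrite !gen_mnm_avar_last code_at_last lE; case: b; case: (zsum g); case: (zsum h).
have -> : i = Ordinal lt_im by [].
by rewrite !gen_mnm_avar code_at_ord tE; case: b; case: (g _); case: (h _).
Qed.

Variable K : fieldType.
Local Notation N := #|{ffun 'I_m -> bool}|.

Lemma gen_mpolyX (g : G) : gen K g = 'X_[gen_mnm g].
Proof. by rewrite /gen mpolyXD mprodXE. Qed.

Definition gens_mnm (u : 'X_{1..N}) : 'X_{1..k} :=
  (\sum_(j < N) gen_mnm (enum_val j) *+ u j)%MM.

Lemma comp_gens_mpolyX (u : 'X_{1..N}) : 'X_[u] \mPo gens K m = 'X_[gens_mnm u].
Proof.
rewrite comp_mpolyX /gens_mnm -mprodXE.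
by apply: eq_bigr => j _; rewrite tnth_mktuple gen_mpolyX mpolyXn.
Qed.

Lemma mdeg_gens_mnm (u : 'X_{1..N}) : mdeg (gens_mnm u) = (m.+1 * mdeg u)%N.
Proof.
rewrite mdeg_sum mdegE big_distrr /=; apply: eq_bigr => j _.
by rewrite mdegMn mdeg_gen_mnm mulnC.
Qed.

Lemma gens_mnmD1 (a b : 'I_N) :
  gens_mnm (U_(a) + U_(b))%MM = (gen_mnm (enum_val a) + gen_mnm (enum_val b))%MM.
Proof.
apply/mnmP => x; rewrite mnm_sumE mnmDE.
under eq_bigr do rewrite mulmnE mnmDE !mnm1E mulnDr.
rewrite big_split /= (bigD1 a) //= [X in (_ + X)%N](bigD1 b) //= !eqxx !muln1.
by rewrite !big1 ?addn0 // => j /negbTE ji; rewrite eq_sym ji muln0.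
Qed.

Lemma homcomp_gen_pair (g h : G) :
  homcomp (Aalg K m) (m + 1).*2 'X_[gen_mnm g + gen_mnm h].
Proof.
split; first by exists 'X_[U_(enum_rank g) + U_(enum_rank h)];
  rewrite comp_gens_mpolyX gens_mnmD1 !enum_rankK.
by rewrite dhomogX /= mdegD !mdeg_gen_mnm; apply/eqP; lia.
Qed.

Lemma homcomp_support (q : {mpoly K[k]}) (u : 'X_{1..k}) :
  homcomp (Aalg K m) (m + 1).*2 q -> q@_u != 0 ->
  exists g h, u = (gen_mnm g + gen_mnm h)%MM.
Proof.
move=> [[P ->] /dhomogP hom] qu.
have deg_u : mdeg u = (m + 1).*2 by apply: hom; rewrite mcoeff_msupp.
have [v _ uv] : exists2 v, v \in msupp P & gens_mnm v == u.
  apply/hasP; apply: contraR qu => /hasPn none.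
  rewrite comp_mpolyEX raddf_sum big1_seq //= => v /none.
  by rewrite mcoeffZ comp_gens_mpolyX mcoeffX => /negbTE ->; rewrite mulr0.
have /mdeg_eq2 [a [b v_ab]] : mdeg v = 2%N.
  move: deg_u; rewrite -(eqP uv) mdeg_gens_mnm => /eqP.
  by rewrite -[(m + 1).*2]muln2 addn1 eqn_pmul2l // => /eqP.
by exists (enum_val a), (enum_val b); rewrite -(eqP uv) v_ab gens_mnmD1.
Qed.

Lemma dim_homcomp_Aalg : has_dim (homcomp (Aalg K m) (m + 1).*2) #|pair_codes m|.
Proof.
apply: (@has_dim_monomials _ _ _ _ (fun i => code_mnm (enum_val i))).
- by move=> i j /code_mnm_inj /enum_val_inj.
- by move=> i; have /imsetP [[g h] _ ->] := enum_valP i; rewrite -gen_mnmD; apply: homcomp_gen_pair.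
- move=> q u /homcomp_support supp /supp [g [h ->]]; rewrite gen_mnmD.
  have gh_in : pair_code (g, h) \in pair_codes m by apply: imset_f.
  by exists (enum_rank_in gh_in (pair_code (g, h))); rewrite enum_rankK_in.
Qed.

End PairMonomials.

Theorem lemma3p6 (K : fieldType) (n : nat) : (2 <= n)%N ->
  exists d : nat,
    has_dim (homcomp (Aalg K n.-1) (n.-1 + 1).*2) d /\
    has_dim (homcomp (Aalg K n) (n + 1).*2) (d + 3 ^ n - 2 ^ n.-1)%N.
Proof.
case: n => [//|m] _ /=; exists #|pair_codes m|; split; first exact: dim_homcomp_Aalg.
suff -> : (#|pair_codes m| + 3 ^ m.+1 - 2 ^ m)%N = #|pair_codes m.+1|.
  exact: dim_homcomp_Aalg.
have := card_pair_codes m; have := card_pair_codes m.+1.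
rewrite !sum_count1_eq0; have := sum_even_count1 m; have := sum_even_count1 m.+1.
rewrite !expnS; lia.
Qed.
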